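(* There exist Pauli Hamiltonians $H$, with $m$ (the number of groups of the sorted insertion grouping) arbitrarily large, such that sorted insertion produces a grouping $\mathcal{G}$ of $H$ with $m$ groups and there is another grouping $\mathcal{G}'$ of $H$ with $V(\mathcal{G})/V(\mathcal{G}')=\Theta(m)$, where for a grouping $\mathcal{G}=(G^{[1]},\dots,G^{[k]})$ and fixed total budget $M$, $V(\mathcal{G})=\min\{\sum_jS_j/M_j:\ M_j>0,\ \sum_jM_j=M\}=(\sum_j\sqrt{S_j})^2/M$ with $S_j=\sum_{i:P_i\in G^{[j]}}c_i^2$.
   Context: A Pauli Hamiltonian is $H=\sum_{i=1}^Nc_iP_i$ with real nonzero $c_i$ and distinct $n$-qubit Pauli strings. A grouping is a list of pairwise disjoint sets of mutually commuting Pauli terms of $H$ covering all terms. Sorted insertion: order the terms by decreasing $|c_i|$ and insert each in turn into the first existing group whose members all commute with it, creating a new group otherwise. $V(\mathcal{G})$ is the variance of the grouped energy estimator under optimal allocation of $M$ shots across groups in the state-independent model where each Pauli has variance $1$ and all covariances vanish (as for the maximally mixed state). *)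

From HB Require Import structures.
From mathcomp Require Import all_boot all_order all_algebra.
From mathcomp Require Import reals.
Set Implicit Arguments. Unset Strict Implicit. Unset Printing Implicit Defensive.
Import Order.TTheory GRing.Theory Num.Theory.
Local Open Scope ring_scope.

(* Single-qubit Pauli operators encoded as 'I_4 : 0 = I, 1 = X, 2 = Y, 3 = Z. *)
Definition pstring (n : nat) := {ffun 'I_n -> 'I_4}.

Definition pcommute (n : nat) (p q : pstring n) : bool :=
  ~~ odd #|[set k : 'I_n | [&& p k != 0%N :> nat, q k != 0%N :> nat & p k != q k]]|.

(* A Pauli Hamiltonian H = sum_{i < N} c i * P i is given by P : 'I_N -> pstring n
   (injective: distinct strings) and c : 'I_N -> R (nonzero). *)
Definition pauli_hamiltonian (R : realType) (n N : nat)
  (P : 'I_N -> pstring n) (c : 'I_N -> R) : Prop :=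
  injective P /\ (forall i, c i != 0).

Definition is_grouping (n N : nat) (P : 'I_N -> pstring n)
  (G : seq {set 'I_N}) : Prop :=
  [/\ (forall a b : nat, (a < size G)%N -> (b < size G)%N -> a != b ->
         [disjoint nth set0 G a & nth set0 G b]),
      (forall i : 'I_N, exists2 g, g \in G & i \in g) &
      (forall g, g \in G -> forall i j, i \in g -> j \in g -> pcommute (P i) (P j))].

Fixpoint si_insert (N : nat) (comm : 'I_N -> 'I_N -> bool) (x : 'I_N)
  (gs : seq (seq 'I_N)) : seq (seq 'I_N) :=
  match gs with
  | [::] => [:: [:: x]]
  | g :: gs' => if all (comm x) g then (x :: g) :: gs'
                else g :: si_insert comm x gs'
  end.

(* Sorted insertion: terms ordered by decreasing |c_i| (stable sort, ties broken
   by index order), each inserted in turn. *)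
Definition sorted_insertion (R : realType) (n N : nat)
  (P : 'I_N -> pstring n) (c : 'I_N -> R) : seq {set 'I_N} :=
  let order := sort (fun i j : 'I_N => `|c j| <= `|c i|) (enum 'I_N) in
  let gs := foldl (fun gs x => si_insert (fun i j => pcommute (P i) (P j)) x gs)
                  [::] order in
  map (fun g => [set i in g]) gs.

Definition group_weight (R : realType) (N : nat) (c : 'I_N -> R) (g : {set 'I_N}) : R :=
  \sum_(i in g) c i ^+ 2.

Definition Var (R : realType) (N : nat) (c : 'I_N -> R) (G : seq {set 'I_N}) (M : R) : R :=
  (\sum_(g <- G) Num.sqrt (group_weight c g)) ^+ 2 / M.

From HB Require Import structures.
From mathcomp Require Import all_boot all_order all_algebra.
From mathcomp Require Import reals.
From mathcomp Require Import ring.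
Set Implicit Arguments. Unset Strict Implicit. Unset Printing Implicit Defensive.
Import Order.TTheory GRing.Theory Num.Theory.
Local Open Scope ring_scope.

(* Take [m] qubits and the [2m] unit-weight terms [Z_j] ([Z] on qubit [j]) and
   [X'_j] ([X] on every qubit except [j]).  [Z_j] commutes with [X'_k] iff
   [j = k], while the [Z]'s, resp. the [X']'s, commute among themselves.  All
   weights tie, so sorted insertion sees [Z_0, X'_0, Z_1, X'_1, ...] and builds
   the [m] groups [{Z_j, X'_j}] of weight 2: [V = (m sqrt 2)^2 / M = 2 m^2 / M].
   The grouping {all [Z_j]}, {all [X'_j]} has two groups of weight [m]:
   [V = (2 sqrt m)^2 / M = 4 m / M].  The ratio is [m / 2]. *)

Definition pauliI : 'I_4 := ord0.
Definition pauliX : 'I_4 := @Ordinal 4 1 isT.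
Definition pauliZ : 'I_4 := @Ordinal 4 3 isT.

Lemma pcommuteC n (p q : pstring n) : pcommute p q = pcommute q p.
Proof.
by rewrite /pcommute; under eq_finset => k do rewrite andbCA (eq_sym (p k)).
Qed.

Lemma pcommute_agree n (p q : pstring n) :
  (forall k, val (p k) != 0%N -> val (q k) != 0%N -> p k = q k) -> pcommute p q.
Proof.
move=> agree; rewrite /pcommute.
suff -> : [set k | [&& val (p k) != 0%N, val (q k) != 0%N & p k != q k]] = set0.
  by rewrite cards0.
by apply/setP => k; rewrite !inE; apply/and3P => -[pk qk /eqP[]]; exact: agree.
Qed.

Section SingleSiteStrings.
Variable n : nat.
Implicit Types q k : 'I_n.

Definition pauliZ_at q : pstring n := [ffun k => if k == q then pauliZ else pauliI].
Definition pauliX_off q : pstring n := [ffun k => if k == q then pauliI else pauliX].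

Lemma pcommute_Z_at q q' : pcommute (pauliZ_at q) (pauliZ_at q').
Proof. by apply: pcommute_agree => k; rewrite !ffunE; case: (k == q); case: (k == q'). Qed.

Lemma pcommute_X_off q q' : pcommute (pauliX_off q) (pauliX_off q').
Proof. by apply: pcommute_agree => k; rewrite !ffunE; case: (k == q); case: (k == q'). Qed.

Lemma pcommute_Z_at_X_off q q' : pcommute (pauliZ_at q) (pauliX_off q') = (q == q').
Proof.
rewrite /pcommute.
have -> : [set k | [&& val (pauliZ_at q k) != 0%N, val (pauliX_off q' k) != 0%N
                    & pauliZ_at q k != pauliX_off q' k]] = [set k | (k == q) && (k != q')].
  by apply/setP => k; rewrite !inE !ffunE; case: (k == q); case: (k == q').
case: (eqVneq q q') => [<- | neq_qq'].
  by rewrite (_ : [set k | _] = set0) ?cards0 //; apply/setP => k; rewrite !inE andbN.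
rewrite (_ : [set k | _] = [set q]) ?cards1 //.
by apply/setP => k; rewrite !inE; case: (eqVneq k q) => // ->.
Qed.

Lemma pauliZ_at_inj : injective pauliZ_at.
Proof. by move=> q q' /(congr1 (fun p : pstring n => p q)); rewrite !ffunE eqxx; case: eqP. Qed.

Lemma pauliX_off_inj : injective pauliX_off.
Proof. by move=> q q' /(congr1 (fun p : pstring n => p q)); rewrite !ffunE eqxx; case: eqP. Qed.

Lemma pauliZ_at_neq_X_off q q' : pauliZ_at q != pauliX_off q'.
Proof. by apply/eqP => /(congr1 (fun p : pstring n => p q)); rewrite !ffunE eqxx; case: eqP. Qed.

End SingleSiteStrings.

Lemma si_insert_cat N (comm : rel 'I_N) x gs rest :
  all (fun g => ~~ all (comm x) g) gs ->
  si_insert comm x (gs ++ rest) = gs ++ si_insert comm x rest.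
Proof. by elim: gs => //= g gs IH /andP[/negbTE -> /IH ->]. Qed.

Section InsertionOfPairs.
Variables (N : nat) (comm : rel 'I_N) (J : eqType) (a b : J -> 'I_N).
Hypothesis comm_pair : forall j, comm (b j) (a j).
Hypothesis anticomm_other_pairs :
  forall j k, j != k -> ~~ comm (a k) (b j) && ~~ comm (b k) (a j).

Lemma foldl_si_insert_pairs s : uniq s ->
  foldl (fun gs x => si_insert comm x gs) [::] (flatten [seq [:: a j; b j] | j <- s])
  = [seq [:: b j; a j] | j <- s].
Proof.
elim/last_ind: s => [//|s k IH]; rewrite rcons_uniq => /andP[k_notin_s /IH {}IH].
rewrite -cats1 !map_cat flatten_cat foldl_cat IH /=.
have rejected x : (forall j, j \in s -> ~~ comm x (b j) || ~~ comm x (a j)) ->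
    all (fun g => ~~ all (comm x) g) [seq [:: b j; a j] | j <- s].
  by move=> rej; apply/allP => _ /mapP[j js ->] /=; rewrite andbT negb_and rej.
have other j : j \in s -> j != k by apply: contraTneq => ->.
rewrite -[X in si_insert _ (a k) X]cats0 si_insert_cat; last first.
  by apply: rejected => j /other/anticomm_other_pairs/andP[-> _].
rewrite si_insert_cat /= ?comm_pair //.
by apply: rejected => j /other/anticomm_other_pairs/andP[_ ->]; rewrite orbT.
Qed.

End InsertionOfPairs.

Lemma sorted_insertion_equal_magnitudes (R : realType) n N
    (P : 'I_N -> pstring n) (c : 'I_N -> R) :
  (forall i j, `|c i| = `|c j|) ->
  sorted_insertion P c = [seq [set i in g] | g <-
    foldl (fun gs x => si_insert (fun i j => pcommute (P i) (P j)) x gs) [::] (enum 'I_N)].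
Proof.
move=> eq_abs; have le_abs i j : `|c j| <= `|c i| by rewrite (eq_abs j i).
rewrite /sorted_insertion sorted_sort //.
apply: pairwise_sorted; elim: (enum 'I_N) => //= i s ->.
by rewrite andbT; apply/allP => j _; apply: le_abs.
Qed.

Lemma flatten_iota_pairs a k :
  flatten [seq [:: j.*2; j.*2.+1] | j <- iota a k] = iota a.*2 k.*2.
Proof. by elim: k a => //= k IH a; rewrite IH !doubleS. Qed.

Lemma group_weight_unit (R : realType) N (g : {set 'I_N}) :
  group_weight (fun=> 1 : R) g = #|g|%:R.
Proof. by rewrite /group_weight expr1n sumr_const. Qed.

Section ZXHamiltonian.
Variable m : nat.
Implicit Types (i : 'I_(m.*2)) (j : 'I_m).

(* Term [2j] is [Z_j] and term [2j+1] is [X'_j]. *)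
Definition zterm j : 'I_(m.*2) := Ordinal (etrans (ltn_double j m) (ltn_ord j)).
Definition xterm j : 'I_(m.*2) := Ordinal (etrans (leq_double j.+1 m) (ltn_ord j)).
Definition qubit_of i : 'I_m := Ordinal (etrans (ltn_half_double i m) (ltn_ord i)).

Definition zx_string i : pstring m :=
  if odd i then pauliX_off (qubit_of i) else pauliZ_at (qubit_of i).

Lemma odd_zterm j : odd (zterm j) = false. Proof. exact: odd_double. Qed.
Lemma odd_xterm j : odd (xterm j) = true. Proof. by rewrite /= odd_double. Qed.

Lemma qubit_of_zterm j : qubit_of (zterm j) = j.
Proof. by apply: val_inj; rewrite /= doubleK. Qed.

Lemma qubit_of_xterm j : qubit_of (xterm j) = j.
Proof. by apply: val_inj; rewrite /= uphalf_double. Qed.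

Lemma zx_string_zterm j : zx_string (zterm j) = pauliZ_at j.
Proof. by rewrite /zx_string odd_zterm qubit_of_zterm. Qed.

Lemma zx_string_xterm j : zx_string (xterm j) = pauliX_off j.
Proof. by rewrite /zx_string odd_xterm qubit_of_xterm. Qed.

Lemma term_split i : i = if odd i then xterm (qubit_of i) else zterm (qubit_of i).
Proof. by apply: val_inj; rewrite -[LHS]odd_double_half; case: (odd i). Qed.

Lemma zterm_neq_xterm j j' : zterm j != xterm j'.
Proof. by apply/eqP => /(congr1 (fun i : 'I_(m.*2) => odd i)); rewrite odd_zterm odd_xterm. Qed.

Lemma zx_string_inj : injective zx_string.
Proof.
move=> i i' eq_str; rewrite (term_split i) (term_split i'); move: eq_str.
have Z_neq_X q q' : pauliZ_at q = pauliX_off q' -> false.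
  by move/eqP; rewrite (negbTE (pauliZ_at_neq_X_off _ _)).
rewrite /zx_string; case: (odd i); case: (odd i').
- by move/pauliX_off_inj->.
- by move/esym/Z_neq_X.
- by move/Z_neq_X.
- by move/pauliZ_at_inj->.
Qed.

Lemma enum_zx_terms : enum 'I_(m.*2) = flatten [seq [:: zterm j; xterm j] | j <- enum 'I_m].
Proof.
apply: (inj_map val_inj); rewrite val_enum_ord -(flatten_iota_pairs 0) -val_enum_ord.
by rewrite map_flatten -!map_comp.
Qed.

Lemma sorted_insertion_zx (R : realType) (c : 'I_(m.*2) -> R) :
  (forall i i', `|c i| = `|c i'|) ->
  sorted_insertion zx_string c = [seq [set i in [:: xterm j; zterm j]] | j <- enum 'I_m].
Proof.
move=> eq_abs; set comm := fun i i' => pcommute (zx_string i) (zx_string i').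
have comm_pair j : comm (xterm j) (zterm j).
  by rewrite /comm zx_string_xterm zx_string_zterm pcommuteC pcommute_Z_at_X_off.
have anticomm_other_pairs j k : j != k ->
    ~~ comm (zterm k) (xterm j) && ~~ comm (xterm k) (zterm j).
  move=> neq_jk; rewrite /comm !zx_string_xterm !zx_string_zterm.
  by rewrite [pcommute (pauliX_off _) _]pcommuteC !pcommute_Z_at_X_off eq_sym neq_jk.
rewrite sorted_insertion_equal_magnitudes // enum_zx_terms.
by rewrite (foldl_si_insert_pairs comm_pair anticomm_other_pairs) ?enum_uniq // -map_comp.
Qed.

Definition parity_grouping : seq {set 'I_(m.*2)} :=
  [:: [set zterm j | j : 'I_m]; [set xterm j | j : 'I_m]].

Lemma parity_grouping_is_grouping : is_grouping zx_string parity_grouping.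
Proof.
have disj : [disjoint [set zterm j | j : 'I_m] & [set xterm j | j : 'I_m]].
  rewrite disjoint_subset; apply/subsetP => _ /imsetP[j _ ->].
  by rewrite inE; apply/imsetP => -[k _ /eqP]; rewrite (negbTE (zterm_neq_xterm _ _)).
split.
- by move=> [|[|a]] [|[|b]] //= _ _ _; rewrite disjoint_sym.
- move=> i; rewrite (term_split i); case: (odd i).
    by exists [set xterm j | j : 'I_m]; rewrite ?inE ?eqxx ?orbT // imset_f.
  by exists [set zterm j | j : 'I_m]; rewrite ?inE ?eqxx // imset_f.
- move=> g; rewrite !inE => /orP[] /eqP-> _ _ /imsetP[j _ ->] /imsetP[k _ ->].
    by rewrite !zx_string_zterm pcommute_Z_at.
  by rewrite !zx_string_xterm pcommute_X_off.
Qed.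

Lemma card_zx_pair j : #|[set i in [:: xterm j; zterm j]]| = 2.
Proof.
by rewrite cardsE; apply/card_uniqP; rewrite /= andbT inE eq_sym zterm_neq_xterm.
Qed.

Lemma card_zterms : #|[set zterm j | j : 'I_m]| = m.
Proof. by rewrite card_imset ?card_ord //; exact: can_inj qubit_of_zterm. Qed.

Lemma card_xterms : #|[set xterm j | j : 'I_m]| = m.
Proof. by rewrite card_imset ?card_ord //; exact: can_inj qubit_of_xterm. Qed.

Variables (R : realType) (M : R).

Lemma Var_sorted_insertion_zx :
  Var (fun=> 1) (sorted_insertion zx_string (fun=> 1 : R)) M = 2 * m%:R ^+ 2 / M.
Proof.
rewrite sorted_insertion_zx // /Var big_map big_enum /=.
rewrite (eq_bigr (fun=> Num.sqrt 2)) => [|j _]; last first.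
  by rewrite group_weight_unit card_zx_pair.
by rewrite sumr_const card_ord -[_ *+ m]mulr_natr exprMn sqr_sqrtr ?ler0n // mulrC.
Qed.

Lemma Var_parity_grouping : Var (fun=> 1 : R) parity_grouping M = 4 * m%:R / M.
Proof.
rewrite /Var !big_cons big_nil addr0 !group_weight_unit card_zterms card_xterms.
by rewrite -mulr2n -[_ *+ 2]mulr_natr exprMn sqr_sqrtr ?ler0n //; ring.
Qed.

End ZXHamiltonian.

Theorem lemma2 (R : realType) :
  exists k1 k2 : R, 0 < k1 /\ 0 < k2 /\
  forall m0 : nat, exists (n N : nat) (P : 'I_N -> pstring n) (c : 'I_N -> R),
    pauli_hamiltonian P c /\
    (m0 <= size (sorted_insertion P c))%N /\
    exists G' : seq {set 'I_N}, is_grouping P G' /\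
      forall M : R, 0 < M ->
        k1 * (size (sorted_insertion P c))%:R
          <= Var c (sorted_insertion P c) M / Var c G' M
          <= k2 * (size (sorted_insertion P c))%:R.
Proof.
have half_gt0 : 0 < 1 / 2 :> R by rewrite divr_gt0.
exists (1 / 2), (1 / 2); do 2 split => //; move=> m0.
exists m0.+1, m0.+1.*2, (@zx_string m0.+1), (fun=> 1).
have size_si : size (sorted_insertion (@zx_string m0.+1) (fun=> 1 : R)) = m0.+1.
  by rewrite sorted_insertion_zx // size_map size_enum_ord.
rewrite size_si; split; first by split; [exact: zx_string_inj | move=> _; exact: oner_neq0].
split => //; exists (parity_grouping m0.+1); split; first exact: parity_grouping_is_grouping.
move=> M M_gt0; rewrite Var_sorted_insertion_zx Var_parity_grouping.
have -> : 2 * m0.+1%:R ^+ 2 / M / (4 * m0.+1%:R / M) = 1 / 2 * m0.+1%:R.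
  by field; rewrite gt_eqF //= nat1r pnatr_eq0.
by rewrite lexx.
Qed.
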